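(* Let $S:M\to\mathbb{R}$ be a smooth function on Minkowski spacetime, let $\mathcal{F}_0$ be a nonzero constant $2$-form with $\mathcal{F}_0^{2}=0$ (Clifford product), let $\mu$ be a real constant, and define the $2$-form field $$\boldsymbol{F}=\mathcal{F}_0\, e^{\boldsymbol{\gamma}^5 S}=\mathcal{F}_0(\cos S+\boldsymbol{\gamma}^5\sin S).$$ (i) If the $1$-form field $\boldsymbol{P}:=-\boldsymbol{\partial} S=-dS$ satisfies $\boldsymbol{P}=\mu\,\boldsymbol{F}\boldsymbol{\gamma}^0\boldsymbol{F}$, then $\boldsymbol{F}$ satisfies the free Maxwell equation $\boldsymbol{\partial}\boldsymbol{F}=0$. (ii) Conversely, if $\boldsymbol{\partial}\boldsymbol{F}=0$, then $S$ satisfies the Hamilton–Jacobi equation of a free massless particle, $\boldsymbol{\partial}S\cdot\boldsymbol{\partial}S=0$. Consequently, for fields of this form, the free photon Hamilton–Jacobi equation $\boldsymbol{\partial}S\cdot\boldsymbol{\partial}S=0$ and the free Maxwell equation $\boldsymbol{\partial}\boldsymbol{F}=0$ are equivalent.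
   Context: Minkowski spacetime is $M\simeq\mathbb{R}^4$ with global coordinates $\{x^\mu\}$ ($\mu=0,1,2,3$) in which the metric is $\boldsymbol{g}=\eta_{\mu\nu}dx^\mu\otimes dx^\nu$, $\eta=\mathrm{diag}(1,-1,-1,-1)$. Write $\boldsymbol{\gamma}^\mu=dx^\mu$. Differential forms are regarded as sections of the Clifford bundle of differential forms $\mathcal{C}\ell(M,\mathtt{g})$, whose Clifford product satisfies $\boldsymbol{\gamma}^\mu\boldsymbol{\gamma}^\nu+\boldsymbol{\gamma}^\nu\boldsymbol{\gamma}^\mu=2\eta^{\mu\nu}$; for $1$-forms $a,b$, $a\cdot b=\tfrac12(ab+ba)$ is the (Minkowski) scalar product, so $a^2=a\cdot a$. The volume element is $\boldsymbol{\gamma}^5=\boldsymbol{\gamma}^0\boldsymbol{\gamma}^1\boldsymbol{\gamma}^2\boldsymbol{\gamma}^3$, which satisfies $(\boldsymbol{\gamma}^5)^2=-1$, anticommutes with $1$-forms and commutes with $2$-forms; $e^{\boldsymbol{\gamma}^5 S}:=\cos S+\boldsymbol{\gamma}^5\sin S$. The Dirac operator is $\boldsymbol{\partial}=\boldsymbol{\gamma}^\mu\partial_\mu=d-\delta$ ($\delta$ the Hodge codifferential), acting via the Clifford product; on a function $S$, $\boldsymbol{\partial}S=dS=\partial_\mu S\,\boldsymbol{\gamma}^\mu$. *)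

From HB Require Import structures.
From mathcomp Require Import all_boot all_order all_algebra.
From mathcomp Require Import all_classical all_reals all_analysis.
Set Implicit Arguments. Unset Strict Implicit. Unset Printing Implicit Defensive.
Import Order.TTheory GRing.Theory Num.Theory.
Import numFieldNormedType.Exports.
Local Open Scope ring_scope.

Definition mpoint (R : realType) := 'rV[R]_4.

Definition coord_vec (R : realType) (mu : 'I_4) : mpoint R :=
  \row_(j < 4) (j == mu)%:R.

Definition pd (R : realType) (mu : 'I_4) (f : mpoint R -> R) (x : mpoint R) : R :=
  'D_(coord_vec R mu) f x.

Fixpoint iter_pd (R : realType) (l : seq 'I_4) (f : mpoint R -> R) : mpoint R -> R :=
  match l with
  | [::] => f
  | mu :: l' => pd mu (iter_pd l' f)
  end.

Definition smooth4 (R : realType) (f : mpoint R -> R) : Prop :=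
  forall (l : seq 'I_4) (x : mpoint R), differentiable (iter_pd l f) x.

(* A (multi)form is given by its components on the basis blades
   gamma^A = gamma^{a_1} ... gamma^{a_k} (a_1 < ... < a_k, A = {a_1..a_k}),
   i.e. the basis dx^{a_1} /\ ... /\ dx^{a_k} of the exterior algebra. *)
Definition mv (R : realType) := {ffun {set 'I_4} -> R}.

Definition eta_diag (R : realType) (c : 'I_4) : R := if c == ord0 then 1 else -1.

Definition symdiff (A B : {set 'I_4}) : {set 'I_4} := (A :\: B) :|: (B :\: A).

(* gamma^A gamma^B = blade_sign A B * gamma^(A symdiff B) *)
Definition blade_sign (R : realType) (A B : {set 'I_4}) : R :=
  (-1) ^+ #|finset.finset (fun p : 'I_4 * 'I_4 => (p.1 \in A) && (p.2 \in B) && (p.2 < p.1)%N)|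
  * \prod_(c in A :&: B) eta_diag R c.

Definition cmul (R : realType) (u v : mv R) : mv R :=
  [ffun C => \sum_(A : {set 'I_4}) \sum_(B : {set 'I_4} | symdiff A B == C)
               blade_sign R A B * u A * v B].

Definition mvs (R : realType) (s : R) : mv R :=
  [ffun A => if A == finset.set0 then s else 0].

Definition gamma (R : realType) (mu : 'I_4) : mv R :=
  [ffun A => (A == finset.set1 mu)%:R].

Definition gamma5 (R : realType) : mv R :=
  cmul (cmul (cmul (gamma R 0) (gamma R 1)) (gamma R 2)) (gamma R 3).

Definition is_2form (R : realType) (u : mv R) : Prop :=
  forall A : {set 'I_4}, #|A| != 2%N -> u A = 0.

Definition mvdot (R : realType) (a b : mv R) : mv R :=
  2^-1 *: (cmul a b + cmul b a).

Definition exp_g5 (R : realType) (s : R) : mv R :=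
  mvs (cos s) + sin s *: gamma5 R.

Definition pd_mv (R : realType) (mu : 'I_4) (F : mpoint R -> mv R) (x : mpoint R) : mv R :=
  [ffun A => pd mu (fun y => F y A) x].

Definition Dirac (R : realType) (F : mpoint R -> mv R) (x : mpoint R) : mv R :=
  \sum_(mu < 4) cmul (gamma R mu) (pd_mv mu F x).

Definition gradS (R : realType) (S : mpoint R -> R) (x : mpoint R) : mv R :=
  \sum_(mu < 4) pd mu S x *: gamma R mu.

(* Since d/ds e^(g5 s) = g5 e^(g5 s) and F0 is constant, the Dirac operator
   gives dF = (dS) F0 g5 e^(g5 S); as g5 and e^(g5 S) are invertible
   (g5^2 = -1, e^(g5 s) e^(g5 t) = e^(g5 (s + t))), dF = 0 iff (dS) F0 = 0.
   In (i), dS = -mu F g0 F and F F0 = F0 F0 e^(g5 S) = 0 because e^(g5 S)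
   commutes with 2-forms, so (dS) F0 = 0.  In (ii), (dS)(dS) = dS.dS is a
   scalar annihilating F0 != 0, hence it vanishes. *)

From HB Require Import structures.
From mathcomp Require Import all_boot all_order all_algebra.
From mathcomp Require Import all_classical all_reals all_analysis.
From mathcomp Require Import ring.

Set Implicit Arguments.
Unset Strict Implicit.
Unset Printing Implicit Defensive.

Import Order.TTheory GRing.Theory Num.Theory.
Import numFieldNormedType.Exports.
Local Open Scope ring_scope.

Lemma symdiffA (A B C : {set 'I_4}) : symdiff A (symdiff B C) = symdiff (symdiff A B) C.
Proof.
apply/finset.setP => x; rewrite /symdiff !inE.
by case: (x \in A); case: (x \in B); case: (x \in C).
Qed.

Lemma symdiffC (A B : {set 'I_4}) : symdiff A B = symdiff B A.
Proof. by apply/finset.setP => x; rewrite /symdiff !inE orbC. Qed.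

Lemma symdiff0 (A : {set 'I_4}) : symdiff A finset.set0 = A.
Proof. by apply/finset.setP => x; rewrite /symdiff !inE; case: (x \in A). Qed.

Lemma symdiffv (A : {set 'I_4}) : symdiff A A = finset.set0.
Proof. by apply/finset.setP => x; rewrite /symdiff !inE; case: (x \in A). Qed.

Definition blade_sign_exp (A B : {set 'I_4}) : nat :=
  (\sum_(p : 'I_4 * 'I_4) [&& p.1 \in A, p.2 \in B & (p.2 < p.1)%N] +
   \sum_(c : 'I_4) [&& c \in A, c \in B & c != ord0])%N.

Lemma blade_signE (R : realType) (A B : {set 'I_4}) :
  blade_sign R A B = (-1) ^+ blade_sign_exp A B.
Proof.
rewrite /blade_sign /blade_sign_exp exprD; congr (_ * _).
  congr (_ ^+ _); rewrite -sum1_card big_mkcond /=; apply: eq_bigr => p _.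
  by rewrite inE andbA; case: (_ && _).
rewrite -prodrXr big_mkcond /=; apply: eq_bigr => c _.
rewrite inE /eta_diag; case: (c \in A); case: (c \in B); case: (c == ord0) => //=;
  by rewrite ?expr0 ?expr1.
Qed.

Lemma odd_sum (I : Type) (r : seq I) (P : pred I) (F : I -> nat) :
  odd (\sum_(i <- r | P i) F i) = \big[addb/false]_(i <- r | P i) odd (F i).
Proof. exact: (big_morph odd oddD). Qed.

(* The sign exponent is bilinear over F_2 in (A, B); this is what makes the
   Clifford product associative. *)
Lemma odd_blade_sign_exp_symdiffl (A B C : {set 'I_4}) :
  odd (blade_sign_exp (symdiff A B) C) = odd (blade_sign_exp A C) (+) odd (blade_sign_exp B C).
Proof.
rewrite /blade_sign_exp !oddD !odd_sum addbACA -!big_split /=.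
congr addb; apply: eq_bigr => i _; rewrite /symdiff !inE.
  by case: (i.1 \in A); case: (i.1 \in B); case: (i.2 \in C); case: (i.2 < i.1)%N.
by case: (i \in A); case: (i \in B); case: (i \in C); case: (i != ord0).
Qed.

Lemma odd_blade_sign_exp_symdiffr (A B C : {set 'I_4}) :
  odd (blade_sign_exp A (symdiff B C)) = odd (blade_sign_exp A B) (+) odd (blade_sign_exp A C).
Proof.
rewrite /blade_sign_exp !oddD !odd_sum addbACA -!big_split /=.
congr addb; apply: eq_bigr => i _; rewrite /symdiff !inE.
  by case: (i.1 \in A); case: (i.2 \in B); case: (i.2 \in C); case: (i.2 < i.1)%N.
by case: (i \in A); case: (i \in B); case: (i \in C); case: (i != ord0).
Qed.

Lemma odd_blade_sign_exp_cocycle (A B C : {set 'I_4}) :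
  odd (blade_sign_exp A B + blade_sign_exp (symdiff A B) C) =
  odd (blade_sign_exp A (symdiff B C) + blade_sign_exp B C).
Proof.
rewrite [LHS]oddD [RHS]oddD.
by rewrite odd_blade_sign_exp_symdiffl odd_blade_sign_exp_symdiffr addbA.
Qed.

Lemma blade_sign_exp0r (A : {set 'I_4}) : blade_sign_exp A finset.set0 = 0%N.
Proof. by rewrite /blade_sign_exp !big1 // => i _; rewrite inE ?andbF. Qed.

Lemma blade_sign_exp0l (A : {set 'I_4}) : blade_sign_exp finset.set0 A = 0%N.
Proof. by rewrite /blade_sign_exp !big1 // => i _; rewrite inE. Qed.

Lemma blade_sign_exp_sorted (A B : {set 'I_4}) :
  (forall a b : 'I_4, a \in A -> b \in B -> (a < b)%N) -> blade_sign_exp A B = 0%N.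
Proof.
move=> AltB; rewrite /blade_sign_exp !big1 // => [c|p] _; case: and3P => // -[].
  by move=> /AltB lt /lt; rewrite ltnn.
by move=> /AltB lt /lt lt12 lt21; have := ltn_trans lt12 lt21; rewrite ltnn.
Qed.

Lemma blade_sign_exp1 (a b : 'I_4) :
  blade_sign_exp (finset.set1 a) (finset.set1 b) = ((b < a)%N + ((a == b) && (a != ord0)))%N.
Proof.
rewrite /blade_sign_exp (bigD1 (a, b)) //= big1 ?addn0; last first.
  by move=> [i j]; rewrite !finset.in_set1 xpair_eqE; case: (i == a); case: (j == b).
rewrite (bigD1 a) //= big1 ?addn0; last by move=> c /negbTE; rewrite finset.in_set1 => ->.
by rewrite !finset.in_set1 !eqxx.
Qed.

Lemma sum_pairE (I J : finType) (F : I * J -> nat) :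
  (\sum_(p : I * J) F p = \sum_i \sum_j F (i, j))%N.
Proof. by rewrite pair_bigA; apply: eq_bigr => -[]. Qed.

Lemma odd_blade_sign_expTT : odd (blade_sign_exp [set: 'I_4] [set: 'I_4]).
Proof. by rewrite /blade_sign_exp sum_pairE !big_ord_recl !big_ord0 !finset.in_setT. Qed.

Lemma odd_blade_sign_expTC (A : {set 'I_4}) : #|A| = 2%N ->
  odd (blade_sign_exp [set: 'I_4] A) = odd (blade_sign_exp A [set: 'I_4]).
Proof.
rewrite /blade_sign_exp !sum_pairE -sum1_card big_mkcond /=.
rewrite !big_ord_recl !big_ord0 !finset.in_setT /=.
by move: (_ \in A) (_ \in A) (_ \in A) (_ \in A); do 4! case.
Qed.

Section CliffordProduct.
Variable R : realType.
Implicit Types (u v w : mv R) (A B C : {set 'I_4}).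

Lemma scaleRE (c d : R) : c *: d = c * d.
Proof. by []. Qed.

Definition blade A : mv R := [ffun X => (X == A)%:R].

Lemma bladeE A X : blade A X = (X == A)%:R.
Proof. by rewrite ffunE. Qed.

Lemma mv_sum_blade u : u = \sum_A u A *: blade A.
Proof.
apply/ffunP => C; rewrite sum_ffunE (bigD1 C) //= big1 ?addr0.
  by rewrite ffunE bladeE eqxx scaleRE mulr1.
by move=> A /negbTE neqAC; rewrite ffunE bladeE eq_sym neqAC scaleRE mulr0.
Qed.

Lemma cmulDl u v w : cmul (u + v) w = cmul u w + cmul v w.
Proof.
apply/ffunP => C; rewrite !ffunE -big_split; apply: eq_bigr => A _.
by rewrite -big_split; apply: eq_bigr => B _; rewrite !ffunE mulrDr mulrDl.
Qed.

Lemma cmulDr u v w : cmul u (v + w) = cmul u v + cmul u w.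
Proof.
apply/ffunP => C; rewrite !ffunE -big_split; apply: eq_bigr => A _.
by rewrite -big_split; apply: eq_bigr => B _; rewrite !ffunE mulrDr.
Qed.

Lemma cmulZl (a : R) u v : cmul (a *: u) v = a *: cmul u v.
Proof.
apply/ffunP => C; rewrite !ffunE scaleRE mulr_sumr; apply: eq_bigr => A _.
by rewrite mulr_sumr; apply: eq_bigr => B _; rewrite !ffunE scaleRE; ring.
Qed.

Lemma cmulZr (a : R) u v : cmul u (a *: v) = a *: cmul u v.
Proof.
apply/ffunP => C; rewrite !ffunE scaleRE mulr_sumr; apply: eq_bigr => A _.
by rewrite mulr_sumr; apply: eq_bigr => B _; rewrite !ffunE scaleRE; ring.
Qed.

Lemma cmul0l v : cmul 0 v = 0.
Proof. by rewrite -[0 in LHS](scale0r 0) cmulZl scale0r. Qed.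

Lemma cmul0r v : cmul v 0 = 0.
Proof. by rewrite -[0 in LHS](scale0r 0) cmulZr scale0r. Qed.

Lemma cmul_suml (I : Type) (r : seq I) (P : pred I) (F : I -> mv R) v :
  cmul (\sum_(i <- r | P i) F i) v = \sum_(i <- r | P i) cmul (F i) v.
Proof. by elim/big_rec2: _ => [|i x y _ <-]; rewrite ?cmul0l ?cmulDl. Qed.

Lemma cmul_sumr (I : Type) (r : seq I) (P : pred I) (F : I -> mv R) v :
  cmul v (\sum_(i <- r | P i) F i) = \sum_(i <- r | P i) cmul v (F i).
Proof. by elim/big_rec2: _ => [|i x y _ <-]; rewrite ?cmul0r ?cmulDr. Qed.

Lemma cmul_blade A B : cmul (blade A) (blade B) = blade_sign R A B *: blade (symdiff A B).
Proof.
apply/ffunP => C; rewrite !ffunE (bigD1 A) //= [X in _ + X]big1 ?addr0; last first.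
  by move=> X /negbTE XA; apply: big1 => Y _; rewrite !bladeE XA mulr0 mul0r.
rewrite big_mkcond (bigD1 B) //= [X in _ + X]big1 ?addr0; last first.
  by move=> Y /negbTE YB; case: ifP => // _; rewrite !bladeE YB mulr0.
rewrite !bladeE !eqxx !mulr1 scaleRE eq_sym.
by case: eqP; rewrite ?mulr1 ?mulr0.
Qed.

Lemma cmul_bladeA A B C :
  cmul (cmul (blade A) (blade B)) (blade C) = cmul (blade A) (cmul (blade B) (blade C)).
Proof.
rewrite !cmul_blade cmulZl cmulZr !cmul_blade !scalerA symdiffA.
congr (_ *: _); rewrite !blade_signE -!exprD -[LHS]signr_odd -[RHS]signr_odd.
by rewrite odd_blade_sign_exp_cocycle addnC.
Qed.

Lemma cmulA u v w : cmul (cmul u v) w = cmul u (cmul v w).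
Proof.
have bbw A B w' : cmul (cmul (blade A) (blade B)) w' = cmul (blade A) (cmul (blade B) w').
  rewrite (mv_sum_blade w') !cmul_sumr; apply: eq_bigr => C _.
  by rewrite !cmulZr cmul_bladeA.
have bvw A v' w' : cmul (cmul (blade A) v') w' = cmul (blade A) (cmul v' w').
  rewrite (mv_sum_blade v') cmul_sumr !cmul_suml cmul_sumr; apply: eq_bigr => B _.
  by rewrite cmulZr !cmulZl cmulZr bbw.
rewrite (mv_sum_blade u) !cmul_suml; apply: eq_bigr => A _.
by rewrite !cmulZl bvw.
Qed.

Lemma mvs_blade (c : R) : mvs c = c *: blade finset.set0.
Proof.
apply/ffunP => X; rewrite !ffunE scaleRE.
by case: (X == finset.set0); rewrite ?mulr1 ?mulr0.
Qed.

Lemma cmul_mvsr u (c : R) : cmul u (mvs c) = c *: u.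
Proof.
rewrite mvs_blade cmulZr; congr (_ *: _).
rewrite [in LHS](mv_sum_blade u) cmul_suml [in RHS](mv_sum_blade u); apply: eq_bigr => A _.
by rewrite cmulZl cmul_blade symdiff0 blade_signE blade_sign_exp0r scale1r.
Qed.

Lemma cmul_mvsl u (c : R) : cmul (mvs c) u = c *: u.
Proof.
rewrite mvs_blade cmulZl; congr (_ *: _).
rewrite [in LHS](mv_sum_blade u) cmul_sumr [in RHS](mv_sum_blade u); apply: eq_bigr => A _.
by rewrite cmulZr cmul_blade symdiffC symdiff0 blade_signE blade_sign_exp0l scale1r.
Qed.

Lemma gamma_blade (mu : 'I_4) : gamma R mu = blade (finset.set1 mu).
Proof. by apply/ffunP => X; rewrite !ffunE. Qed.

Lemma gamma5_blade : gamma5 R = blade [set: 'I_4].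
Proof.
rewrite /gamma5 !gamma_blade !(cmul_blade, cmulZl) !scalerA !blade_signE.
rewrite !blade_sign_exp_sorted ?expr0 ?mulr1 ?scale1r.
  by congr blade; apply/finset.setP => -[[|[|[|[|?]]]] ?]; rewrite /symdiff !inE.
all: by move=> [[|[|[|[|?]]]] ?] [[|[|[|[|?]]]] ?]; rewrite /symdiff !inE.
Qed.

Lemma gamma5_sq : cmul (gamma5 R) (gamma5 R) = mvs (-1).
Proof.
rewrite gamma5_blade cmul_blade symdiffv blade_signE -signr_odd odd_blade_sign_expTT.
by rewrite mvs_blade.
Qed.

Lemma gamma5_2formC u : is_2form u -> cmul (gamma5 R) u = cmul u (gamma5 R).
Proof.
move=> u2; rewrite (mv_sum_blade u) cmul_sumr cmul_suml; apply: eq_bigr => A _.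
rewrite cmulZr cmulZl; have [cardA|cardA] := eqVneq #|A| 2%N; last by rewrite u2 ?scale0r.
rewrite gamma5_blade !cmul_blade symdiffC !blade_signE.
by rewrite -[in LHS]signr_odd -[in RHS]signr_odd odd_blade_sign_expTC.
Qed.

Lemma gamma_anticomm (a b : 'I_4) :
  cmul (gamma R a) (gamma R b) + cmul (gamma R b) (gamma R a) =
  ((a == b)%:R * 2 * eta_diag R a) *: blade finset.set0.
Proof.
rewrite !gamma_blade !cmul_blade (symdiffC (finset.set1 b)) -scalerDl !blade_signE.
rewrite !blade_sign_exp1; have [<-|ab] := eqVneq a b.
  rewrite symdiffv ltnn /eta_diag.
  by case: (a == ord0); rewrite /= ?expr0 ?expr1; congr (_ *: _); ring.
rewrite /= !addn0 !mul0r.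
suff -> : (-1) ^+ (b < a)%N + (-1) ^+ (a < b)%N = 0 :> R by rewrite !scale0r.
by case: ltngtP ab => [| |/val_inj ->]; rewrite ?eqxx ?expr0 ?expr1 ?addNr ?subrr.
Qed.

Lemma mvdot_sum_gamma (a : 'I_4 -> R) :
  mvdot (\sum_mu a mu *: gamma R mu) (\sum_mu a mu *: gamma R mu) =
  mvs (\sum_mu eta_diag R mu * a mu ^+ 2).
Proof.
set g := \sum_mu _.
have gg : cmul g g = \sum_mu \sum_nu (a mu * a nu) *: cmul (gamma R mu) (gamma R nu).
  rewrite cmul_suml; apply: eq_bigr => mu _; rewrite cmul_sumr; apply: eq_bigr => nu _.
  by rewrite cmulZl cmulZr scalerA.
have gg' : cmul g g = \sum_mu \sum_nu (a mu * a nu) *: cmul (gamma R nu) (gamma R mu).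
  by rewrite gg exchange_big; apply: eq_bigr => mu _; apply: eq_bigr => nu _; rewrite mulrC.
rewrite /mvdot {1}gg gg' -big_split /= mvs_blade.
rewrite (eq_bigr (fun mu => (2 * eta_diag R mu * a mu ^+ 2) *: blade finset.set0)); last first.
  move=> mu _; rewrite -big_split /= (bigD1 mu) //= big1 ?addr0.
    by rewrite -scalerDr gamma_anticomm eqxx mul1r scalerA; congr (_ *: _); ring.
  move=> nu nu_mu; rewrite -scalerDr gamma_anticomm eq_sym (negbTE nu_mu).
  by rewrite !mul0r !scale0r scaler0.
rewrite -scaler_suml scalerA mulr_sumr; congr (_ *: _); apply: eq_bigr => mu _.
by rewrite !mulrA mulVf ?mul1r.
Qed.

Lemma cmul_exp_g5 u (s : R) : cmul u (exp_g5 s) = cos s *: u + sin s *: cmul u (gamma5 R).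
Proof. by rewrite /exp_g5 cmulDr cmul_mvsr cmulZr. Qed.

Lemma exp_g5_2formC u (s : R) : is_2form u -> cmul (exp_g5 s) u = cmul u (exp_g5 s).
Proof.
by move=> u2; rewrite cmul_exp_g5 /exp_g5 cmulDl cmul_mvsl cmulZl gamma5_2formC.
Qed.

Lemma exp_g5D (s t : R) : cmul (exp_g5 s) (exp_g5 t) = exp_g5 (s + t).
Proof.
rewrite cmul_exp_g5 /exp_g5 cmulDl cmul_mvsl cmulZl gamma5_sq cosD sinD !mvs_blade.
move: (blade _) (gamma5 R) => b g.
by apply/ffunP => A; rewrite !ffunE !scaleRE; ring.
Qed.

Lemma exp_g5_0 : exp_g5 0 = mvs 1 :> mv R.
Proof. by rewrite /exp_g5 cos0 sin0 scale0r addr0. Qed.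

Lemma cmul_gamma5_exp_g5_eq0 u (s : R) :
  cmul u (cmul (gamma5 R) (exp_g5 s)) = 0 -> u = 0.
Proof.
move=> ug5e; have ug5 : cmul u (gamma5 R) = 0.
  have : cmul (cmul u (cmul (gamma5 R) (exp_g5 s))) (exp_g5 (- s)) = 0.
    by rewrite ug5e cmul0l.
  by rewrite cmulA (cmulA (gamma5 R)) exp_g5D subrr exp_g5_0 cmul_mvsr scale1r.
have : cmul (cmul u (gamma5 R)) (gamma5 R) = 0 by rewrite ug5 cmul0l.
by rewrite cmulA gamma5_sq cmul_mvsr scaleN1r => /eqP; rewrite oppr_eq0 => /eqP.
Qed.

End CliffordProduct.

Lemma derive_cos_sin_comp (R : realType) (S : mpoint R -> R) (a b : R) (x v : mpoint R) :
  differentiable S x ->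
  'D_v (fun y => cos (S y) * a + sin (S y) * b) x =
  'D_v S x * (- sin (S x) * a + cos (S x) * b).
Proof.
move=> dS; pose g r := a * cos r + b * sin r.
have g' r : is_derive r (1 : R) g (a *: - sin r + b *: cos r) by apply: is_deriveD.
have dg : differentiable g (S x) by apply/derivable1_diffP; case: (g' (S x)).
rewrite (_ : (fun y => _) = g \o S); last first.
  by apply/funext => y; rewrite /g /= !(mulrC a) !(mulrC b).
rewrite deriveE; last exact: differentiable_comp.
rewrite diff_comp // /= diff1E // derive1E -deriveE //.
have [_ ->] := g' (S x).
by rewrite !scaleRE (mulrC a) (mulrC b).
Qed.

Lemma pd_mv_cmul_exp_g5 (R : realType) (u : mv R) (S : mpoint R -> R) (mu : 'I_4) x :
  differentiable S x ->
  pd_mv mu (fun y => cmul u (exp_g5 (S y))) x =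
  pd mu S x *: cmul u (cmul (gamma5 R) (exp_g5 (S x))).
Proof.
move=> dS; under eq_fun do rewrite cmul_exp_g5.
have -> : cmul u (cmul (gamma5 R) (exp_g5 (S x))) =
          - sin (S x) *: u + cos (S x) *: cmul u (gamma5 R).
  rewrite /exp_g5 cmulDr cmul_mvsr cmulZr gamma5_sq cmulDr !cmulZr cmul_mvsr.
  by rewrite scaleN1r scalerN scaleNr addrC.
move: (cmul u (gamma5 R)) => G; apply/ffunP => A; rewrite !ffunE /pd.
under eq_fun do rewrite !ffunE !scaleRE.
by rewrite derive_cos_sin_comp // !scaleRE.
Qed.

Lemma Dirac_cmul_exp_g5 (R : realType) (u : mv R) (S : mpoint R -> R) x :
  differentiable S x ->
  Dirac (fun y => cmul u (exp_g5 (S y))) x =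
  cmul (cmul (gradS S x) u) (cmul (gamma5 R) (exp_g5 (S x))).
Proof.
move=> dS; rewrite /Dirac /gradS !cmul_suml; apply: eq_bigr => mu _.
by rewrite pd_mv_cmul_exp_g5 // cmulZr !cmulZl cmulA.
Qed.

Lemma Dirac_cmul_exp_g5_eq0 (R : realType) (u : mv R) (S : mpoint R -> R) x :
  differentiable S x ->
  Dirac (fun y => cmul u (exp_g5 (S y))) x = 0 <-> cmul (gradS S x) u = 0.
Proof.
move=> dS; rewrite Dirac_cmul_exp_g5 //; split; first exact: cmul_gamma5_exp_g5_eq0.
by move=> ->; rewrite cmul0l.
Qed.

Lemma mvdot_gradS_eq0 (R : realType) (S : mpoint R -> R) x (u : mv R) :
  u != 0 -> cmul (gradS S x) u = 0 -> mvdot (gradS S x) (gradS S x) = 0.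
Proof.
move=> u_neq0 gu.
have : cmul (mvdot (gradS S x) (gradS S x)) u = 0.
  by rewrite /mvdot cmulZl cmulDl !cmulA gu cmul0r addr0 scaler0.
rewrite /gradS mvdot_sum_gamma cmul_mvsl => /eqP.
by rewrite scaler_eq0 (negbTE u_neq0) orbF => /eqP ->; rewrite mvs_blade scale0r.
Qed.

Theorem mainTheorem1 (R : realType) (S : mpoint R -> R) (F0 : mv R) (mu : R) :
  smooth4 S ->
  is_2form F0 -> F0 != 0 -> cmul F0 F0 = 0 ->
  let F := fun x : mpoint R => cmul F0 (exp_g5 (S x)) in
  ((forall x, - gradS S x = mu *: cmul (cmul (F x) (gamma R 0)) (F x)) ->
     forall x, Dirac F x = 0)
  /\
  ((forall x, Dirac F x = 0) -> forall x, mvdot (gradS S x) (gradS S x) = 0).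
Proof.
move=> smooth_S F0_2form F0_neq0 F0_sq F.
have Dirac_F_eq0 x : Dirac F x = 0 <-> cmul (gradS S x) F0 = 0.
  exact: Dirac_cmul_exp_g5_eq0 (smooth_S [::] x).
split=> [P_FF x | Dirac_F x]; last exact/(mvdot_gradS_eq0 F0_neq0)/Dirac_F_eq0.
have F_F0 : cmul (F x) F0 = 0.
  by rewrite /F cmulA exp_g5_2formC // -cmulA F0_sq cmul0l.
apply/Dirac_F_eq0; rewrite -[gradS S x]opprK P_FF -scaleNr cmulZl cmulA F_F0.
by rewrite cmul0r scaler0.
Qed.
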